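(* Let $k\geq 3$ and let $G$ be a $k$-uniform hypergraph. Then there is a picture $(P_0,\psi_0)$ over $G$ together with a family $(L_e)_{e\in E(G)}$ of mutually disjoint combinatorial lines such that $P_0=\bigcup_{e\in E(G)}L_e$ and $\psi_0[L_e]=e$ for every $e\in E(G)$.
   Context: A combinatorial line in $[k]^m$ is a set $\{\eta(i)\colon i\in[k]\}$ where, for some partition $[m]=C\cup M$ with $M\neq\emptyset$ and values $u_c\in[k]$ ($c\in C$), $\eta(i)$ has $c$-th coordinate $u_c$ for $c\in C$ and coordinate $i$ on every coordinate in $M$. A quasiline in $[k]^m$ is a $k$-element subset $L$ such that in every coordinate the entries of the points of $L$ are either all identical or mutually distinct. A picture over a $k$-uniform hypergraph $G$ ($k\geq3$) is a pair $(P,\psi)$ consisting of a subset $P\subseteq[k]^m$ of some Hales–Jewett cube and a map $\psi\colon P\to V(G)$ such that every quasiline $L\subseteq P$ is a combinatorial line and satisfies $\psi[L]\in E(G)$. *)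

From mathcomp Require Import all_boot.
Set Implicit Arguments. Unset Strict Implicit. Unset Printing Implicit Defensive.

Definition cube (k m : nat) : finType := {ffun 'I_m -> 'I_k}.

Definition is_comb_line (k m : nat) (L : {set cube k m}) : Prop :=
  exists (M : {set 'I_m}) (u : 'I_m -> 'I_k),
    M != set0 /\
    L = [set [ffun c => if c \in M then i else u c] | i : 'I_k].

Definition is_quasiline (k m : nat) (L : {set cube k m}) : Prop :=
  #|L| = k /\
  forall c : 'I_m,
    (forall x y, x \in L -> y \in L -> x c = y c) \/
    (forall x y, x \in L -> y \in L -> x != y -> x c != y c).

Definition pimage (k m : nat) (V : finType) (P : {set cube k m})
  (psi : {x : cube k m | x \in P} -> V) (L : {set cube k m}) : {set V} :=
  psi @: [set x : {x : cube k m | x \in P} | val x \in L].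

Definition is_picture (k m : nat) (V : finType) (E : {set {set V}})
  (P : {set cube k m}) (psi : {x : cube k m | x \in P} -> V) : Prop :=
  forall L : {set cube k m}, L \subset P -> is_quasiline L ->
    is_comb_line L /\ pimage psi L \in E.

Definition k_uniform (k : nat) (V : finType) (E : {set {set V}}) : Prop :=
  forall e, e \in E -> #|e| = k.

From mathcomp Require Import all_boot.
Set Implicit Arguments. Unset Strict Implicit. Unset Printing Implicit Defensive.

(* Each edge e gets two private coordinates: a free coordinate, moving along
   the line L_e, and a marker coordinate, equal to 1 on L_e and 0 on every
   other line, which makes the lines disjoint; psi_0 sends the point of L_e
   with free coordinate i to the i-th vertex of e.  A quasiline inside P_0
   meeting L_e sees at the marker of e only the two values 0 and 1; since it
   has k >= 3 points, that coordinate must be constant on it, so the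
   quasiline lies in L_e and, having k points, is L_e. *)

Definition comb_line_point (k m : nat) (M : {set 'I_m}) (u : 'I_m -> 'I_k)
    (i : 'I_k) : cube k m :=
  [ffun c => if c \in M then i else u c].

Definition comb_line (k m : nat) (M : {set 'I_m}) (u : 'I_m -> 'I_k) :
    {set cube k m} :=
  [set comb_line_point M u i | i : 'I_k].

Lemma comb_line_is_comb_line (k m : nat) (M : {set 'I_m}) (u : 'I_m -> 'I_k) :
  M != set0 -> is_comb_line (comb_line M u).
Proof. by move=> M0; exists M, u. Qed.

Lemma comb_line_point_inj (k m : nat) (M : {set 'I_m}) (u : 'I_m -> 'I_k) :
  M != set0 -> injective (comb_line_point M u).
Proof.
case/set0Pn=> c cM i j /(congr1 (fun x : cube k m => x c)).
by rewrite !ffunE cM.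
Qed.

Lemma card_comb_line (k m : nat) (M : {set 'I_m}) (u : 'I_m -> 'I_k) :
  M != set0 -> #|comb_line M u| = k.
Proof.
by move=> M0; rewrite card_imset ?card_ord //; apply: comb_line_point_inj.
Qed.

Lemma quasiline_coord_const (k m : nat) (L : {set cube k m}) (c : 'I_m)
    (S : {set 'I_k}) :
  is_quasiline L -> (forall x, x \in L -> x c \in S) -> #|S| < k ->
  {in L &, forall x y : cube k m, x c = y c}.
Proof.
move=> [cardL /(_ c) [// | injL]] LS ltSk.
have inj_c : {in L &, injective (fun x : cube k m => x c)}.
  move=> x y xL yL; apply: contra_eq; exact: injL.
have : #|L| <= #|S|.
  rewrite -(card_in_imset inj_c); apply: subset_leq_card.
  by apply/subsetP=> _ /imsetP[x xL ->]; exact: LS.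
by rewrite cardL leqNgt ltSk.
Qed.

Section EdgeLines.

Variables (k : nat) (V : finType) (E : {set {set V}}).
Hypotheses (hk : 3 <= k) (hE : k_uniform k E).

Local Notation m := #|{: {set V} * bool}|.

Definition free_coord (e : {set V}) : 'I_m := enum_rank (e, false).
Definition marker_coord (e : {set V}) : 'I_m := enum_rank (e, true).

Definition zero_label : 'I_k := Ordinal (ltnW (ltnW hk)).
Definition one_label : 'I_k := Ordinal (ltnW hk).

Definition marker (e : {set V}) (c : 'I_m) : 'I_k :=
  if c == marker_coord e then one_label else zero_label.

Definition edge_point (e : {set V}) : 'I_k -> cube k m :=
  comb_line_point [set free_coord e] (marker e).

Definition edge_line (e : {set V}) : {set cube k m} :=
  comb_line [set free_coord e] (marker e).

Lemma free_coord_nonempty (e : {set V}) : [set free_coord e] != set0.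
Proof. by apply/set0Pn; exists (free_coord e); rewrite inE. Qed.

Lemma edge_line_is_comb_line (e : {set V}) : is_comb_line (edge_line e).
Proof. exact/comb_line_is_comb_line/free_coord_nonempty. Qed.

Lemma card_edge_line (e : {set V}) : #|edge_line e| = k.
Proof. exact/card_comb_line/free_coord_nonempty. Qed.

Lemma edge_point_free (e : {set V}) (i : 'I_k) :
  edge_point e i (free_coord e) = i.
Proof. by rewrite ffunE set11. Qed.

Lemma edge_point_marker (e e' : {set V}) (i : 'I_k) :
  edge_point e i (marker_coord e') = if e' == e then one_label else zero_label.
Proof.
rewrite ffunE in_set1 (inj_eq enum_rank_inj) /marker (inj_eq enum_rank_inj).
by rewrite !xpair_eqE andbF andbT.
Qed.

Lemma edge_point_in_line (e e' : {set V}) (i : 'I_k) :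
  (edge_point e i \in edge_line e') = (e == e').
Proof.
apply/imsetP/eqP=> [[j _] | <-]; last by exists i.
move/(congr1 (fun x : cube k m => x (marker_coord e))).
by rewrite !edge_point_marker eqxx; case: eqP.
Qed.

Lemma disjoint_edge_lines (e1 e2 : {set V}) :
  e1 != e2 -> [disjoint edge_line e1 & edge_line e2].
Proof.
move=> ne; rewrite disjoint_subset; apply/subsetP=> _ /imsetP[i _ ->].
by rewrite inE edge_point_in_line.
Qed.

Definition picture_points : {set cube k m} := \bigcup_(e in E) edge_line e.

Lemma picture_pointsP (x : cube k m) :
  reflect (exists2 e, e \in E & exists i, x = edge_point e i)
          (x \in picture_points).
Proof.
apply: (iffP bigcupP) => [[e eE /imsetP[i _ ->]] | [e eE [i ->]]].
  by exists e => //; exists i.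
by exists e => //; apply/imsetP; exists i.
Qed.

Definition edge_of (x : cube k m) : {set V} :=
  odflt set0 [pick e in E | x \in edge_line e].

Lemma edge_of_point (e : {set V}) (i : 'I_k) :
  e \in E -> edge_of (edge_point e i) = e.
Proof.
move=> eE; rewrite /edge_of; case: pickP => [e' /andP[_] | /(_ e)].
  by rewrite edge_point_in_line => /eqP.
by rewrite eE edge_point_in_line eqxx.
Qed.

Lemma picture_points_gt0 (x : cube k m) : x \in picture_points -> 0 < #|V|.
Proof.
case/bigcupP=> e eE _; apply: leq_trans (max_card e).
by rewrite hE // ltnW // ltnW.
Qed.

(* The default vertex of [nth] is never reached (see [vertex_of_point]); it is
   drawn from the membership proof, which shows that [V] is nonempty. *)
Definition vertex_of (x : {x : cube k m | x \in picture_points}) : V :=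
  let e := edge_of (val x) in
  nth (enum_val (Ordinal (picture_points_gt0 (valP x))))
      (enum e) (val x (free_coord e)).

Lemma vertex_of_point (e : {set V}) (i : 'I_k)
    (xP : edge_point e i \in picture_points) (v0 : V) :
  e \in E -> vertex_of (exist _ (edge_point e i) xP) = nth v0 (enum e) i.
Proof.
move=> eE; rewrite /vertex_of /= edge_of_point // edge_point_free.
by apply: set_nth_default; rewrite -cardE hE.
Qed.

Lemma pimage_edge_line (e : {set V}) :
  e \in E -> pimage vertex_of (edge_line e) = e.
Proof.
move=> eE; apply/setP=> v; apply/imsetP/idP=> [[[x xP]] | ve].
  rewrite inE /= => /imsetP[i _ xi] ->; move: xP; rewrite xi => xP.
  by rewrite (vertex_of_point _ v) // -mem_enum mem_nth // -cardE hE.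
have ltik : index v (enum e) < k by rewrite -(hE eE) cardE index_mem mem_enum.
have xP : edge_point e (Ordinal ltik) \in picture_points.
  by apply/picture_pointsP; exists e => //; exists (Ordinal ltik).
exists (exist _ (edge_point e (Ordinal ltik)) xP).
  by rewrite inE /= edge_point_in_line.
by rewrite (vertex_of_point _ v) //= nth_index // mem_enum.
Qed.

Lemma quasiline_edge_line (L : {set cube k m}) :
  L \subset picture_points -> is_quasiline L ->
  exists2 e, e \in E & L = edge_line e.
Proof.
move=> LP qL; have [cardL _] := qL.
have /card_gt0P[x0 x0L] : 0 < #|L| by rewrite cardL ltnW // ltnW.
have /picture_pointsP[e eE [i x0i]] := subsetP LP _ x0L.
have labelsL :
    forall x, x \in L -> x (marker_coord e) \in [set zero_label; one_label].
  move=> x /(subsetP LP)/picture_pointsP[e' _ [j ->]].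
  by rewrite edge_point_marker; case: ifP; rewrite !inE eqxx ?orbT.
have few_labels : #|[set zero_label; one_label]| < k.
  by rewrite cards2; case: (_ != _); rewrite // ltnW.
have marker_const := quasiline_coord_const qL labelsL few_labels.
exists e => //; apply/eqP; rewrite eqEcard card_edge_line cardL leqnn andbT.
apply/subsetP=> y yL; have /picture_pointsP[e' _ [j yj]] := subsetP LP _ yL.
move: (marker_const _ _ x0L yL).
rewrite x0i yj !edge_point_marker edge_point_in_line eqxx.
by rewrite eq_sym; case: eqP.
Qed.

Lemma picture_points_is_picture : is_picture E vertex_of.
Proof.
move=> L LP /(quasiline_edge_line LP)[e eE ->].
by split; [exact: edge_line_is_comb_line | rewrite pimage_edge_line].
Qed.

End EdgeLines.

Theorem lemma4p3 (k : nat) (hk : 3 <= k) (V : finType) (E : {set {set V}})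
  (hE : k_uniform k E) :
  exists (m : nat) (P0 : {set cube k m}) (psi0 : {x : cube k m | x \in P0} -> V)
         (Lf : {set V} -> {set cube k m}),
    is_picture E psi0 /\
    (forall e, e \in E -> is_comb_line (Lf e)) /\
    (forall e1 e2, e1 \in E -> e2 \in E -> e1 != e2 -> [disjoint Lf e1 & Lf e2]) /\
    P0 = \bigcup_(e in E) Lf e /\
    (forall e, e \in E -> pimage psi0 (Lf e) = e).
Proof.
exists _, (picture_points E hk), (vertex_of hE), (edge_line hk).
split; first exact: picture_points_is_picture.
split; first by move=> e _; exact: edge_line_is_comb_line.
split; first by move=> e1 e2 _ _; exact: disjoint_edge_lines.
by split; last exact: pimage_edge_line.
Qed.
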